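(* Let $F$ be a partially colored forest. Alice can win the $3$-Reduced Coloring Game on $\mathcal{R}'(F)$ if every trunk $R'$ of $\mathcal{R}'(F)$ satisfies one of: (i) $R'$ has exactly one colored vertex and contains no edge of $E_{>>2}(\mathcal{R}'(F))$; or (ii) $R'$ has no colored vertices and there exists a vertex $v\in V(R')$ that covers $E_{>>2}(R')$.
   Context: A partial coloring assigns to some vertices colors from a set of $3$ colors so that adjacent colored vertices differ; a color is legal for an uncolored vertex $v$ if no neighbor of $v$ has it. The $k$-Reduced Coloring Game ($k$-RCG) on a partially colored graph: Bob and Alice alternate turns, Bob first, each coloring an uncolored vertex with a legal color from a $k$-set of colors; Bob may pass; Alice may only color vertices of degree at least $k$; Bob wins if at some point an uncolored vertex has no legal color; Alice wins once every vertex of degree at least $k$ is colored. For a partially colored forest $F$, a trunk of $F$ is a maximal connected subgraph $R$ such that every colored vertex of $R$ is a leaf of $R$; $\mathcal{R}(F)$ is the partially colored forest formed by the disjoint union of all trunks of $F$ (a colored vertex lying in several trunks appears as a separate colored copy in each). For a graph $G$, $E_{>2}(G)$ is the set of edges $xy$ with $d_G(x)>2$ or $d_G(y)>2$, and $E_{>>2}(G)$ the set of edges $xy$ with $d_G(x)>2$ and $d_G(y)>2$. The reduced graph is $\mathcal{R}'(F)=\mathcal{R}(F)-\{xy: xy\notin E_{>2}(\mathcal{R}(F))\}$; its trunks are defined as for any partially colored forest. A vertex $v$ covers a set of edges if $v$ is an endpoint of every edge in the set. *)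

From mathcomp Require Import all_boot.
Set Implicit Arguments. Unset Strict Implicit. Unset Printing Implicit Defensive.

(* Graphs: a finite vertex type V with a symmetric irreflexive adjacency
   relation e.  A partial coloring with colors 'I_k is c : V -> option 'I_k
   (None = uncolored). *)

Section Graphs.
Variables (V : finType) (k : nat) (e : rel V) (c : V -> option 'I_k).

Definition deg (x : V) : nat := #|[set y | e x y]|.

Definition simple_graph : Prop := symmetric e /\ irreflexive e.

Definition forest : Prop :=
  forall p : seq V, uniq p -> 2 < size p -> ~~ cycle e p.

Definition proper_partial_coloring : Prop :=
  forall x y, e x y -> c x != None -> c x != c y.

(* A subgraph is given by a vertex set and a (symmetric) set of ordered edges *)
Definition subgraph := ({set V} * {set V * V})%type.

Definition is_subgraph (S : subgraph) : bool :=
  [forall p in S.2, [&& e p.1 p.2, p.1 \in S.1, p.2 \in S.1 & (p.2, p.1) \in S.2]].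

Definition degS (S : subgraph) (x : V) : nat := #|[set y | (x, y) \in S.2]|.

Definition connectedS (S : subgraph) : bool :=
  [forall x in S.1, forall y in S.1, connect (fun a b => (a, b) \in S.2) x y].

Definition trunk_prop (S : subgraph) : bool :=
  [&& is_subgraph S, S.1 != set0, connectedS S &
      [forall v in S.1, (c v != None) ==> (degS S v == 1)]].

Definition is_trunk (S : subgraph) : bool :=
  trunk_prop S &&
  [forall S' : subgraph,
     [&& trunk_prop S', S.1 \subset S'.1 & S.2 \subset S'.2] ==> (S' == S)].

Definition in_Ebb2S (S : subgraph) (x y : V) : bool :=
  (2 < degS S x) && (2 < degS S y).

Definition legal (d : V -> option 'I_k) (v : V) (col : 'I_k) : bool :=
  [forall y, e v y ==> (d y != Some col)].

Definition upd (d : V -> option 'I_k) (v : V) (col : 'I_k) : V -> option 'I_k :=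
  fun w => if w == v then Some col else d w.

Definition bob_won (d : V -> option 'I_k) : Prop :=
  exists v, d v = None /\ forall col, ~~ legal d v col.

Definition alice_done (d : V -> option 'I_k) : Prop :=
  forall v, k <= deg v -> d v <> None.

(* alice_wins_B d : Alice has a winning strategy from position d, Bob to move.
   alice_wins_A d : Alice has a winning strategy from position d, Alice to move.
   (Least fixed point: Alice must force a win in finitely many moves.) *)
Inductive alice_wins_B : (V -> option 'I_k) -> Prop :=
| wB_done d : ~ bob_won d -> alice_done d -> alice_wins_B d
| wB_move d : ~ bob_won d ->
    alice_wins_A d (* Bob passes *) ->
    (forall v col, d v = None -> legal d v col -> alice_wins_A (upd d v col)) ->
    alice_wins_B d
with alice_wins_A : (V -> option 'I_k) -> Prop :=
| wA_done d : ~ bob_won d -> alice_done d -> alice_wins_A d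
| wA_move d v col : ~ bob_won d -> d v = None -> k <= deg v -> legal d v col ->
    alice_wins_B (upd d v col) -> alice_wins_A d.

(* Alice wins the k-RCG on (V, e, c): Bob moves first *)
Definition alice_wins_RCG : Prop := alice_wins_B c.

End Graphs.

Section Reduction.
Variables (V : finType) (e : rel V) (c : V -> option 'I_3).

(* vertices of R(F): pairs (trunk R, vertex v of R) -- disjoint union of trunks *)
Definition RV : finType :=
  {p : subgraph V * V | is_trunk e c p.1 && (p.2 \in p.1.1)}.

Definition Redge : rel RV :=
  fun a b => ((val a).1 == (val b).1) && (((val a).2, (val b).2) \in (val a).1.2).

Definition Rcol (a : RV) : option 'I_3 := c (val a).2.

(* R'(F) = R(F) minus the edges not in E_{>2}(R(F)) *)
Definition Redge' : rel RV :=
  fun a b => Redge a b && ((2 < deg Redge a) || (2 < deg Redge b)).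

End Reduction.

Arguments Redge {V} e c _ _.
Arguments Redge' {V} e c _ _.
Arguments Rcol {V} e c _.

(* In R'(F) colored vertices are leaves, so every component with an edge is
   a trunk.  Alice roots each of them: at its colored vertex in case (i), at a
   vertex covering its high-high edges in case (ii).  A high vertex is a center
   if it is its own root; the parent of a vertex is its neighbor towards the
   root, when that neighbor is high.  Since the graph is a forest, a high
   vertex w has at most one neighbor that is colored or is not a child of w.
   Alice maintains: (a) an uncolored center has no colored neighbor, and
   (b) an uncolored high non-center w sees at most one "danger", i.e. a color
   on a neighbor or an uncolored neighbor that is not a child of w.  Then after
   any single move of Bob every uncolored high vertex sees at most two colors,
   and low vertices always keep a legal color, so Bob never wins.  When Bob
   colors a vertex whose parent w is uncolored, Alice colors w, unless the
   parent of w is an uncolored center u: then she colors u with Bob's color,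
   so that w still sees a single color.  Otherwise she colors an uncolored
   center, or any uncolored high vertex. *)

From mathcomp Require Import all_boot zify.
Set Implicit Arguments. Unset Strict Implicit. Unset Printing Implicit Defensive.

Section Strategy.
Variables (W : finType) (E : rel W).
Hypothesis E_sym : symmetric E.
Variables (centers : {set W}) (parent : W -> option W).

Definition high (w : W) := 3 <= deg E w.

Hypothesis center_high : forall v, v \in centers -> high v.
Hypothesis parent_center_nbr : forall v y, v \in centers -> E v y -> parent y = Some v.
Hypothesis center_orphan : forall v, v \in centers -> parent v = None.
Hypothesis centers_cover :
  forall a b, E a b -> high a -> high b -> (a \in centers) || (b \in centers).
Hypothesis parent_high : forall y w, parent y = Some w -> high w.

Implicit Types (d : W -> option 'I_3) (u v w x y : W) (a b : 'I_3).

Definition nbr_colors d w : {set 'I_3} := [set a | [exists y, E w y && (d y == Some a)]].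

Definition foreign_uncolored d w :=
  [set y | E w y && (d y == None) && (parent y != Some w)].

Definition danger d w := #|nbr_colors d w| + #|foreign_uncolored d w|.

Definition safe d :=
  (forall v, v \in centers -> d v = None -> forall y, E v y -> d y = None) /\
  (forall w, high w -> w \notin centers -> d w = None -> danger d w <= 1).

Lemma updE d x a w : upd d x a w = if w == x then Some a else d w.
Proof. by []. Qed.

Lemma upd_comm d x y a b : x != y -> upd (upd d x a) y b =1 upd (upd d y b) x a.
Proof. by move=> xy w; rewrite !updE; case: (w =P x) => [->|//]; rewrite (negbTE xy). Qed.

Lemma legal_of_card_nbr_colors d w : #|nbr_colors d w| <= 2 -> exists a, legal E d w a.
Proof.
move=> small; have /set0Pn[a] : ~: nbr_colors d w != set0.
  by rewrite -card_gt0; have := cardsC (nbr_colors d w); rewrite card_ord; lia.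
rewrite inE => aNcol; exists a; apply/forallP=> y; apply/implyP=> Ewy.
apply: contra aNcol => /eqP dy; rewrite inE; apply/existsP; exists y; by rewrite Ewy dy eqxx.
Qed.

Lemma card_nbr_colors_le_deg d w : #|nbr_colors d w| <= deg E w.
Proof.
apply: leq_trans (leq_imset_card (fun y => odflt ord0 (d y)) [set y | E w y]).
apply/subset_leq_card/subsetP=> a; rewrite inE => /existsP[y /andP[Ewy /eqP dy]].
by apply/imsetP; exists y; rewrite ?inE ?dy.
Qed.

Lemma card_nbr_colors_upd d x a w : #|nbr_colors (upd d x a) w| <= (#|nbr_colors d w|).+1.
Proof.
have : nbr_colors (upd d x a) w \subset a |: nbr_colors d w.
  apply/subsetP=> b; rewrite !inE => /existsP[y /andP[Ewy]]; rewrite updE.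
  case: (y =P x) => [_ /eqP[->]|_ dy]; first by rewrite eqxx.
  by apply/orP; right; apply/existsP; exists y; rewrite Ewy dy.
by move/subset_leq_card; rewrite cardsU1; case: (a \in nbr_colors d w) => /=; lia.
Qed.

Lemma not_bob_won_of d : (forall w, d w = None -> #|nbr_colors d w| <= 2) -> ~ bob_won E d.
Proof.
move=> small [w [dw noLegal]]; have [a leg] := legal_of_card_nbr_colors (small w dw).
by move: (noLegal a); rewrite leg.
Qed.

(* Coloring neighbors [y] of [w] that are not children of [w] never raises
   the danger at [w]: each new color is paid for by a foreign neighbor. *)
Lemma danger_mono d1 d2 w :
  (forall y, d1 y != None -> d2 y = d1 y) ->
  (forall y, E w y -> d1 y = None -> d2 y != None -> parent y != Some w) ->
  danger d2 w <= danger d1 w.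
Proof.
move=> keep newForeign.
set N := [set y | E w y && (d1 y == None) && (d2 y != None)].
have N_foreign : N \subset foreign_uncolored d1 w.
  apply/subsetP=> y; rewrite !inE => /andP[/andP[Ewy /eqP d1y] d2y].
  by rewrite Ewy d1y eqxx /= newForeign.
have foreign2 : foreign_uncolored d2 w \subset foreign_uncolored d1 w :\: N.
  apply/subsetP=> y; rewrite !inE => /andP[/andP[Ewy /eqP d2y] py].
  have d1y : d1 y = None.
    by case E1: (d1 y) => [b|] //; move: (keep y); rewrite E1 d2y => /(_ isT).
  by rewrite Ewy d1y d2y eqxx py.
have colors2 : nbr_colors d2 w \subset nbr_colors d1 w :|: [set odflt ord0 (d2 y) | y in N].
  apply/subsetP=> b; rewrite !inE => /existsP[y /andP[Ewy /eqP d2y]].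
  case E1: (d1 y) => [b'|].
    move: (keep y); rewrite E1 d2y => /(_ isT) [->].
    by apply/orP; left; apply/existsP; exists y; rewrite Ewy E1 eqxx.
  apply/orP; right; apply/imsetP; exists y; last by rewrite d2y.
  by rewrite inE Ewy E1 d2y.
have card_colors2 : #|nbr_colors d2 w| <= #|nbr_colors d1 w| + #|N|.
  apply: leq_trans (subset_leq_card colors2) _; apply: leq_trans (leq_card_setU _ _) _.
  by rewrite leq_add2l leq_imset_card.
have := subset_leq_card foreign2; rewrite cardsD (setIidPr N_foreign).
have := subset_leq_card N_foreign; rewrite /danger; lia.
Qed.

Lemma danger_le_card d w :
  danger d w <= #|[set y | E w y && ((d y != None) || (parent y != Some w))]|.
Proof.
set A := [set y | E w y && (d y != None)].
have card_colors : #|nbr_colors d w| <= #|A|.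
  apply: leq_trans (leq_imset_card (fun y => odflt ord0 (d y)) A).
  apply/subset_leq_card/subsetP=> a; rewrite inE => /existsP[y /andP[Ewy /eqP dy]].
  by apply/imsetP; exists y; rewrite ?inE ?Ewy ?dy.
have disjoint_A : A :&: foreign_uncolored d w = set0.
  by apply/setP=> y; rewrite !inE; case: (d y) => [b|]; rewrite /= ?andbF ?andbT.
have sub_A : A :|: foreign_uncolored d w \subset
          [set y | E w y && ((d y != None) || (parent y != Some w))].
  by apply/subsetP=> y; rewrite !inE; case: (d y) => [b|] /=; rewrite ?andbT ?andbF ?orbF.
have := cardsUI A (foreign_uncolored d w); rewrite disjoint_A cards0 addn0.
have := subset_leq_card sub_A; rewrite /danger; lia.
Qed.

(* The same-color trick: coloring the only danger [u] of [w] with the color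
   of a newly colored neighbor [x] leaves a single color around [w]. *)
Lemma danger_upd_twin d w u x a : danger d w <= 1 -> u \in foreign_uncolored d w ->
  danger (upd (upd d u a) x a) w <= 1.
Proof.
move=> dw1 uF.
have F1 : #|foreign_uncolored d w| <= 1 by move: dw1; rewrite /danger; lia.
have C0 : nbr_colors d w = set0.
  apply/eqP; rewrite -cards_eq0.
  have : 0 < #|foreign_uncolored d w| by apply/card_gt0P; exists u.
  by move: dw1; rewrite /danger; lia.
have F0 : foreign_uncolored (upd (upd d u a) x a) w = set0.
  apply/setP=> y; rewrite !inE !updE.
  case: (y =P x) => [_|_]; first by rewrite andbF.
  case: (y =P u) => [_|yu]; first by rewrite andbF.
  apply/negP=> yF; apply: yu.
  by have := card_le1P F1 u uF y; rewrite !inE yF => /esym/eqP.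
have : nbr_colors (upd (upd d u a) x a) w \subset [set a].
  apply/subsetP=> b; rewrite !inE => /existsP[y /andP[Ewy]]; rewrite !updE.
  case: (y =P x) => [_ /eqP[->]//|_]; case: (y =P u) => [_ /eqP[->]//|_] dy.
  have : b \in nbr_colors d w by rewrite inE; apply/existsP; exists y; rewrite Ewy.
  by rewrite C0 inE.
by move/subset_leq_card; rewrite cards1 /danger F0 cards0 addn0.
Qed.

Lemma safe_ext d1 d2 : d1 =1 d2 -> safe d1 -> safe d2.
Proof.
move=> eqd [cen dan]; have eqcol w : nbr_colors d1 w = nbr_colors d2 w.
  by apply/setP=> a; rewrite !inE; apply: eq_existsb => y; rewrite eqd.
have eqfor w : foreign_uncolored d1 w = foreign_uncolored d2 w.
  by apply/setP=> y; rewrite !inE eqd.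
split=> [v vC|w hw wC]; rewrite -eqd.
  by move=> dv y Evy; rewrite -eqd; apply: cen vC dv y Evy.
by rewrite /danger -eqcol -eqfor; apply: dan.
Qed.

Lemma safe_card_nbr_colors d w : safe d -> high w -> d w = None -> #|nbr_colors d w| <= 1.
Proof.
move=> [cen dan] hw dw; case wC: (w \in centers); last first.
  by have := dan w hw (negbT wC) dw; rewrite /danger; lia.
suff -> : nbr_colors d w = set0 by rewrite cards0.
apply/setP=> a; rewrite !inE; apply/existsP=> -[y /andP[Ewy /eqP dy]].
by rewrite (cen w wC dw y Ewy) in dy.
Qed.

Lemma safe_not_bob_won d : safe d -> ~ bob_won E d.
Proof.
move=> sd; apply: not_bob_won_of => w dw; case hw: (high w).
  by have := safe_card_nbr_colors sd hw dw; lia.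
by have := card_nbr_colors_le_deg d w; move: hw; rewrite /high; lia.
Qed.

Lemma safe_not_bob_won_upd d x a : safe d -> ~ bob_won E (upd d x a).
Proof.
move=> sd; apply: not_bob_won_of => w; rewrite updE; case: eqP => // _ dw.
case hw: (high w).
  by have := card_nbr_colors_upd d x a w; have := safe_card_nbr_colors sd hw dw; lia.
by have := card_nbr_colors_le_deg (upd d x a) w; move: hw; rewrite /high; lia.
Qed.

Lemma safe_legal_upd d x a w : safe d -> high w -> d w = None ->
  exists b, legal E (upd d x a) w b.
Proof.
move=> sd hw dw; apply: legal_of_card_nbr_colors.
by have := card_nbr_colors_upd d x a w; have := safe_card_nbr_colors sd hw dw; lia.
Qed.

(* Away from the parent of [x], [danger_mono] applies. *)
Lemma safe_upd d x a : safe d -> d x = None ->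
  (forall w, E w x -> parent x = Some w -> upd d x a w = None ->
     (w \notin centers) && (danger (upd d x a) w <= 1)) ->
  safe (upd d x a).
Proof.
move=> [cen dan] dx atParent; split.
  move=> v vC; rewrite updE; case: (v =P x) => // vx dv y Evy; rewrite updE.
  case: (y =P x) => [yx|_]; last exact: cen vC dv y Evy.
  rewrite yx in Evy; have := atParent v Evy (parent_center_nbr vC Evy).
  by rewrite updE (introF eqP vx) vC => /(_ dv).
move=> w hw wC; rewrite updE; case: (w =P x) => // wx dw.
case Pw: (E w x && (parent x == Some w)).
  case/andP: Pw => Ewx /eqP pxw.
  have d1w : upd d x a w = None by rewrite updE (introF eqP wx).
  by case/andP: (atParent w Ewx pxw d1w).
apply: leq_trans (dan w hw wC dw); apply: danger_mono.
  by move=> y; rewrite updE; case: (y =P x) => // ->; rewrite dx.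
move=> y Ewy dy; rewrite updE; case: (y =P x) => [yx _|_]; last by rewrite dy.
by move: Pw; rewrite -yx Ewy => /negbT.
Qed.

Lemma safe_upd_parent_colored d x a : safe d -> d x = None ->
  (forall w, E w x -> parent x = Some w -> upd d x a w != None) -> safe (upd d x a).
Proof.
move=> sd dx colored; apply: safe_upd => // w Ewx pxw.
by move/eqP: (colored w Ewx pxw).
Qed.

Definition num_uncolored d := #|[set u | d u == None]|.

Lemma num_uncolored_upd d x a : d x = None -> num_uncolored (upd d x a) < num_uncolored d.
Proof.
move=> dx; apply/proper_card/properP; split.
  by apply/subsetP=> u; rewrite !inE updE; case: (u =P x).
by exists x; rewrite !inE ?updE ?eqxx ?dx.
Qed.

Definition safe_wins_below n := forall d, num_uncolored d < n -> safe d -> alice_wins_B E d.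

Lemma alice_colors d v a : ~ bob_won E d -> safe_wins_below (num_uncolored d) ->
  d v = None -> high v -> legal E d v a -> safe (upd d v a) -> alice_wins_A E d.
Proof.
move=> nb IH dv hv leg sd'.
exact: (wA_move nb dv hv leg (IH _ (num_uncolored_upd a dv) sd')).
Qed.

Lemma alice_move d : safe d -> safe_wins_below (num_uncolored d) -> alice_wins_A E d.
Proof.
move=> sd IH; have nb := safe_not_bob_won sd; have [cen _] := sd.
case: (pickP [pred v | (v \in centers) && (d v == None)]) => [v /andP[vC /eqP dv] | noC].
  apply: (alice_colors (a := ord0) nb IH dv (center_high vC)).
    by apply/forallP=> y; apply/implyP=> Evy; rewrite (cen v vC dv y Evy).
  by apply: safe_upd_parent_colored => // w _; rewrite center_orphan.
case: (pickP [pred w | high w && (d w == None)]) => [w /andP[hw /eqP dw] | noW]; last first.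
  by apply: wA_done => // v hv dv; move: (noW v); rewrite /= /high hv dv eqxx.
have [a leg] : exists a, legal E d w a.
  by apply: legal_of_card_nbr_colors; have := safe_card_nbr_colors sd hw dw; lia.
apply: (alice_colors nb IH dw hw leg); apply: safe_upd_parent_colored => // u Euw pwu.
have wC : w \notin centers by apply/negP=> wC; move: (noC w); rewrite /= wC dw.
have uC : u \in centers.
  by move: (centers_cover Euw (parent_high pwu) hw); rewrite (negbTE wC) orbF.
by rewrite updE; case: (u =P w) => // _; move: (noC u); rewrite /= uC => /negbT.
Qed.

Lemma alice_reply_parent d x a w : safe d -> d x = None -> parent x = Some w ->
  d w = None -> w != x -> (forall u, E u w -> parent w = Some u -> d u != None) ->
  safe_wins_below (num_uncolored (upd d x a)) -> alice_wins_A E (upd d x a).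
Proof.
move=> sd dx pxw dw wx parentColored IH.
have [b leg] := safe_legal_upd x a sd (parent_high pxw) dw.
have d1w : upd d x a w = None by rewrite updE (negbTE wx).
apply: (alice_colors (safe_not_bob_won_upd sd) IH d1w (parent_high pxw) leg).
apply: safe_ext (upd_comm d b a wx) _.
have sw : safe (upd d w b).
  apply: safe_upd_parent_colored => // u Euw pwu.
  by rewrite updE; case: (u =P w) => // _; apply: parentColored.
apply: safe_upd_parent_colored => //; first by rewrite updE eq_sym (negbTE wx).
by move=> w' _; rewrite pxw => -[<-]; rewrite !updE eqxx; case: (w =P x).
Qed.

Lemma alice_reply_center d x a w u : safe d -> d x = None -> parent x = Some w ->
  d w = None -> E u w -> parent w = Some u -> d u = None ->
  safe_wins_below (num_uncolored (upd d x a)) -> alice_wins_A E (upd d x a).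
Proof.
move=> sd dx pxw dw Euw pwu du IH; have [cen dan] := sd.
have wC : w \notin centers by apply/negP=> /center_orphan; rewrite pwu.
have uC : u \in centers.
  by move: (centers_cover Euw (parent_high pwu) (parent_high pxw)); rewrite (negbTE wC) orbF.
have ux : u != x by apply/eqP=> ux; move: (center_orphan uC); rewrite ux pxw.
have d1u : upd d x a u = None by rewrite updE (negbTE ux).
have leg : legal E (upd d x a) u a.
  apply/forallP=> y; apply/implyP=> Euy; rewrite updE; case: (y =P x) => [yx|_].
    by move: (parent_center_nbr uC Euy); rewrite yx pxw => -[wu]; rewrite wu uC in wC.
  by rewrite (cen u uC du y Euy).
apply: (alice_colors (safe_not_bob_won_upd sd) IH d1u (center_high uC) leg).
apply: safe_ext (upd_comm d a a ux) _.
have su : safe (upd d u a) by apply: safe_upd_parent_colored => // v _; rewrite center_orphan.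
apply: safe_upd => //; first by rewrite updE eq_sym (negbTE ux).
move=> w' _; rewrite pxw => -[<-] _; rewrite wC /=.
apply: danger_upd_twin (dan w (parent_high pxw) wC dw) _.
by rewrite inE E_sym Euw du center_orphan.
Qed.

Lemma alice_reply d x a : safe d -> d x = None ->
  safe_wins_below (num_uncolored d) -> alice_wins_A E (upd d x a).
Proof.
move=> sd dx IH.
have IH1 : safe_wins_below (num_uncolored (upd d x a)).
  by move=> d' lt; apply: IH; apply: ltn_trans lt (num_uncolored_upd a dx).
have parentColored : (forall w, E w x -> parent x = Some w -> upd d x a w != None) ->
    alice_wins_A E (upd d x a).
  by move=> colored; apply: alice_move (safe_upd_parent_colored sd dx colored) IH1.
case pxw: (parent x) => [w|]; last by apply: parentColored => w; rewrite pxw.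
case d1w: (upd d x a w) => [b|].
  by apply: parentColored => w' _; rewrite pxw => -[<-]; rewrite d1w.
have wx : w != x by apply/eqP=> wx; move: d1w; rewrite updE wx eqxx.
have dw : d w = None by move: d1w; rewrite updE (negbTE wx).
case: (pickP [pred u | E u w && (parent w == Some u) && (d u == None)]) =>
   [u /andP[/andP[Euw /eqP pwu] /eqP du] | none].
  exact: alice_reply_center sd dx pxw dw Euw pwu du IH1.
apply: alice_reply_parent sd dx pxw dw wx _ IH1 => u Euw pwu.
by move: (none u); rewrite /= Euw pwu eqxx /= => /negbT.
Qed.

Lemma alice_wins_of_safe d : safe d -> alice_wins_B E d.
Proof.
suff IH n : safe_wins_below n by apply: (IH (num_uncolored d).+1).
elim: n => [//|n IHn] d' lt sd'.
have IH' : safe_wins_below (num_uncolored d').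
  by move=> d'' lt'; apply: IHn; apply: leq_trans lt' lt.
apply: wB_move (safe_not_bob_won sd') (alice_move sd' IH') _ => x a dx _.
exact: alice_reply.
Qed.

End Strategy.

Section ForestPaths.
Variables (U : finType) (E : rel U).
Hypotheses (E_sym : symmetric E) (E_irr : irreflexive E) (E_forest : forest E).
Implicit Types (r u w x y z : U) (s : seq U).

Definition avoid z : rel U := fun u w => [&& E u w, u != z & w != z].

Lemma avoid_sym z : symmetric (avoid z).
Proof. by move=> u w; rewrite /avoid E_sym; case: (u != z); case: (w != z). Qed.

Lemma path_avoid_notin z x s : path (avoid z) x s -> z \notin s.
Proof.
elim: s x => [//|y s IH] x /= /andP[/and3P[_ _ yz] p].
by rewrite inE negb_or eq_sym yz (IH y p).
Qed.

Lemma path_avoid z x s : z != x -> z \notin s -> path E x s -> path (avoid z) x s.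
Proof.
elim: s x => [//|y s IH] x zx /=; rewrite inE negb_or => /andP[zy zs] /andP[xy p].
by rewrite /avoid xy eq_sym zx eq_sym zy /= IH.
Qed.

Lemma connect_avoid_to z x : connect (avoid x) z x -> z = x.
Proof.
case/connectP=> s; case/lastP: s => [_ -> //|s t]; rewrite last_rcons => pth tx.
by move: pth; rewrite rcons_path tx => /andP[_ /and3P[_ _]]; rewrite eqxx.
Qed.

Lemma connect_avoid_either y w r : y != w -> connect E y r ->
  connect (avoid w) y r \/ connect (avoid y) w r.
Proof.
move=> yw /connectP[s pth ->]; case: (shortenP pth) => p' pth' up _.
case wp: (w \in p'); last first.
  by left; apply/connectP; exists p' => //; apply: path_avoid; rewrite ?wp // eq_sym.
right; case/splitPr: wp pth' up => p1 p2; rewrite cat_path => /and3P[_ _ p2p].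
rewrite cons_uniq mem_cat negb_or => /andP[/andP[_]]; rewrite inE negb_or.
case/andP=> yw' yp2 _; apply/connectP; exists p2; last by rewrite last_cat.
exact: path_avoid yw' yp2 p2p.
Qed.

(* Two distinct neighbors of [y] joined to [r] outside [y] would close a cycle. *)
Lemma forest_avoid_nbr_uniq y z1 z2 r : E y z1 -> E y z2 ->
  connect (avoid y) z1 r -> connect (avoid y) z2 r -> z1 = z2.
Proof.
move=> yz1 yz2 c1 c2; have : connect (avoid y) z1 z2.
  by apply: connect_trans c1 _; rewrite (sym_connect_sym (@avoid_sym y)).
case: (z1 =P z2) => // nz /connectP[s pth lst].
case: (shortenP pth) lst => p pth' up _ lst.
have yp : y \notin p := path_avoid_notin pth'.
have yz1' : y != z1 by apply: contraTneq yz1 => <-; rewrite E_irr.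
have pthE : path E z1 p by apply: sub_path pth' => u w /and3P[].
case: p pth' up yp lst pthE => [_ _ _ lst _|t p _ up yp lst pthE].
  by case: nz; rewrite lst.
have u3 : uniq [:: y, z1, t & p] by rewrite cons_uniq up andbT inE negb_or yz1' yp.
have cyc : path E z1 (rcons (t :: p) y) by rewrite rcons_path pthE -lst E_sym yz2.
by move: (E_forest u3 isT) cyc; rewrite /cycle rcons_cons /= yz1 => /negP.
Qed.

End ForestPaths.

Lemma is_subgraph_edge (U : finType) (E : rel U) (S : subgraph U) p :
  is_subgraph E S -> p \in S.2 ->
  [&& E p.1 p.2, p.1 \in S.1, p.2 \in S.1 & (p.2, p.1) \in S.2].
Proof. by move/forallP/(_ p)/implyP. Qed.

Section Components.
Variables (U : finType) (E : rel U) (k : nat) (col : U -> option 'I_k).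
Hypothesis E_sym : symmetric E.
Hypothesis colored_leaf : forall u, col u != None -> deg E u <= 1.
Implicit Types (a b u v x y : U).

Definition component a : subgraph U :=
  ([set b | connect E a b], [set p | E p.1 p.2 && connect E a p.1]).

Lemma degS_component a v : connect E a v -> degS (component a) v = deg E v.
Proof. by move=> av; apply: eq_card => y; rewrite !inE /= av andbT. Qed.

Lemma connect_component a x y : connect E a x -> connect E x y ->
  connect (fun u v => (u, v) \in (component a).2) x y.
Proof.
move=> ax /connectP[s pth ->]; apply/connectP; exists s => //.
elim: s x ax pth => [//|z s IH] x ax /= /andP[xz p].
by rewrite inE /= xz ax IH //; apply: connect_trans ax (connect1 xz).
Qed.

Lemma trunk_prop_component a : 0 < deg E a -> trunk_prop E col (component a).
Proof.
have csym := sym_connect_sym E_sym.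
move=> deg_a; apply/and4P; split.
- apply/forallP=> p; apply/implyP; rewrite inE => /andP[Ep ap].
  have ap2 := connect_trans ap (connect1 Ep).
  by rewrite !inE Ep ap ap2 E_sym Ep.
- by apply/set0Pn; exists a; rewrite inE connect0.
- apply/forallP=> x; apply/implyP=> ax; apply/forallP=> y; apply/implyP=> ay.
  rewrite !inE in ax ay; apply: (connect_component ax); apply: connect_trans _ ay.
  by rewrite csym.
apply/forallP=> v; apply/implyP; rewrite inE => av; apply/implyP => cv.
rewrite degS_component // eqn_leq colored_leaf //=.
case/connectP: av => s; case/lastP: s => [_ -> //|s t]; rewrite rcons_path last_rcons.
case/andP=> _ Et ->; rewrite card_gt0; apply/set0Pn; exists (last a s).
by rewrite inE E_sym.
Qed.

Lemma component_trunk a : 0 < deg E a -> is_trunk E col (component a).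
Proof.
move=> deg_a; rewrite /is_trunk trunk_prop_component //=.
apply/forallP=> S; apply/implyP=> /and3P[/and4P[subS _ connS _] sub1 sub2].
have aS : a \in S.1 by apply: (subsetP sub1); rewrite inE connect0.
have sub1' : S.1 \subset (component a).1.
  apply/subsetP=> x xS; rewrite inE.
  move: connS => /forallP/(_ a)/implyP/(_ aS)/forallP/(_ x)/implyP/(_ xS).
  case/connectP=> s pth ->; apply/connectP; exists s => //.
  by apply: sub_path pth => u v /(is_subgraph_edge subS) /and4P[].
have sub2' : S.2 \subset (component a).2.
  apply/subsetP=> p /(is_subgraph_edge subS) /and4P[Ep p1S _ _].
  by move: (subsetP sub1' _ p1S); rewrite !inE Ep.
by rewrite [S]surjective_pairing xpair_eqE !eqEsubset sub1 sub1' sub2 sub2'.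
Qed.

End Components.

Section TrunkForest.
Variables (U : finType) (E : rel U) (col : U -> option 'I_3).
Hypotheses (E_sym : symmetric E) (E_irr : irreflexive E) (E_forest : forest E).
Hypothesis colored_leaf : forall u, col u != None -> deg E u <= 1.
Hypothesis trunk_cases : forall R : subgraph U, is_trunk E col R ->
     ( #|[set v in R.1 | col v != None]| = 1 /\
       (forall x y, (x, y) \in R.2 -> ~~ ((2 < deg E x) && (2 < deg E y))) )
     \/
     ( (forall v, v \in R.1 -> col v = None) /\
       exists2 v, v \in R.1 &
         forall x y, (x, y) \in R.2 -> in_Ebb2S R x y -> (v == x) || (v == y) ).
Implicit Types (a b r u v w x y z : U).

Definition rooted_at a r :=
  [forall y, connect E a y ==> (col y != None) ==> (y == r)] &&
  [forall x, forall y, [&& E x y, connect E a x, high E x & high E y] ==> (r == x) || (r == y)].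

Definition root a := odflt a [pick r | connect E a r && rooted_at a r].

Lemma exists_root a : 0 < deg E a -> exists r, connect E a r && rooted_at a r.
Proof.
move=> deg_a; have inC y : (y \in (component E a).1) = connect E a y by rewrite inE.
have inE2 x y : ((x, y) \in (component E a).2) = E x y && connect E a x by rewrite inE.
case: (trunk_cases (component_trunk E_sym colored_leaf deg_a)) =>
  [[one noHH]|[noCol [v av cov]]].
  have /cards1P[r colR] : #|[set v in (component E a).1 | col v != None]| == 1 by rewrite one.
  have colEq y : (y \in (component E a).1) && (col y != None) = (y == r).
    by rewrite -in_set1 -colR inE.
  have := colEq r; rewrite eqxx inC => /andP[ar _].
  exists r; rewrite ar /=; apply/andP; split.
    by apply/forallP=> y; apply/implyP=> ay; apply/implyP=> cy; rewrite -colEq inC ay.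
  apply/forallP=> x; apply/forallP=> y; apply/implyP=> /and4P[Exy ax hx hy].
  have := noHH x y; rewrite inE2 Exy ax /= => /(_ isT).
  by rewrite /high in hx hy; rewrite hx hy.
exists v; rewrite -inC av /=; apply/andP; split.
  by apply/forallP=> y; apply/implyP=> ay; rewrite noCol ?inC.
apply/forallP=> x; apply/forallP=> y; apply/implyP=> /and4P[Exy ax hx hy].
apply: cov; first by rewrite inE2 Exy.
have ay := connect_trans ax (connect1 Exy).
by rewrite /in_Ebb2S !degS_component //; apply/andP.
Qed.

Lemma root_spec a : 0 < deg E a -> connect E a (root a) && rooted_at a (root a).
Proof. by move/exists_root=> [r ar]; rewrite /root; case: pickP => [r' //|/(_ r)]; rewrite ar. Qed.

Lemma root_eq a b : 0 < deg E a -> connect E a b -> root a = root b.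
Proof.
move=> deg_a ab; have same := same_connect (sym_connect_sym E_sym) ab.
have predE r : connect E a r && rooted_at a r = connect E b r && rooted_at b r.
  rewrite same /rooted_at; congr (_ && (_ && _)); apply: eq_forallb => y; rewrite ?same //.
rewrite /root (eq_pick predE); case: pickP => // none.
by case: (exists_root deg_a) => r; rewrite predE none.
Qed.

Lemma high_deg_gt0 a : high E a -> 0 < deg E a.
Proof. by rewrite /high; lia. Qed.

Definition centers := [set v | high E v && (root v == v)].

Definition parent y := [pick z | E y z && connect (avoid E y) z (root y) & high E z].

Lemma parent_eq y w : E y w -> connect (avoid E y) w (root y) -> high E w -> parent y = Some w.
Proof.
move=> yw wr hw; rewrite /parent; case: pickP => [z /andP[/andP[yz zr] _]|/(_ w)].
  by rewrite (forest_avoid_nbr_uniq E_sym E_irr E_forest yz yw zr wr).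
by rewrite yw wr hw.
Qed.

Lemma root_center v : v \in centers -> root v = v.
Proof. by rewrite inE => /andP[_ /eqP]. Qed.

Lemma parent_center_nbr v y : v \in centers -> E v y -> parent y = Some v.
Proof.
move=> vC vy; have hv : high E v by move: vC; rewrite inE => /andP[].
apply: (parent_eq _ _ hv); first by rewrite E_sym.
by rewrite -(root_eq (high_deg_gt0 hv) (connect1 vy)) root_center.
Qed.

Lemma center_orphan v : v \in centers -> parent v = None.
Proof.
move=> vC; rewrite /parent; case: pickP => // z /andP[/andP[vz]].
by rewrite root_center // => /connect_avoid_to zv; rewrite zv E_irr in vz.
Qed.

Lemma centers_cover x y : E x y -> high E x -> high E y -> (x \in centers) || (y \in centers).
Proof.
move=> xy hx hy; case/andP: (root_spec (high_deg_gt0 hx)) => _ /andP[_].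
move=> /forallP/(_ x)/forallP/(_ y); rewrite xy connect0 hx hy /= => /orP[/eqP rx|/eqP ry].
  by rewrite inE hx rx eqxx.
by rewrite !inE hy -(root_eq (high_deg_gt0 hx) (connect1 xy)) ry eqxx orbT.
Qed.

Lemma parent_high y w : parent y = Some w -> high E w.
Proof. by rewrite /parent; case: pickP => // z /andP[_ hz] [<-]. Qed.

Lemma colored_is_root a y : 0 < deg E a -> connect E a y -> col y != None -> y = root a.
Proof.
move=> deg_a ay cy; case/andP: (root_spec deg_a) => _ /andP[/forallP/(_ y)].
by rewrite ay cy => /eqP.
Qed.

(* Every neighbor of [w] that is colored or not a child of [w] lies towards
   the root; in a forest there is at most one such neighbor. *)
Lemma card_rootward_nbrs w : high E w ->
  #|[set y | E w y && ((col y != None) || (parent y != Some w))]| <= 1.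
Proof.
move=> hw; have deg_w := high_deg_gt0 hw.
have /andP[wr _] := root_spec deg_w.
apply: (@leq_trans #|[set y | E w y && connect (avoid E w) y (root w)]|).
  apply/subset_leq_card/subsetP=> y; rewrite !inE => /andP[wy]; rewrite wy /=.
  case/orP=> [cy|py].
    by rewrite -(colored_is_root deg_w (connect1 wy) cy) connect0.
  have yw : y != w by apply: contraTneq wy => ->; rewrite E_irr.
  have yr : connect E y (root w).
    by apply: connect_trans wr; rewrite (sym_connect_sym E_sym) connect1.
  case: (connect_avoid_either yw yr) => // wr'; move: py; rewrite (parent_eq _ _ hw) ?eqxx //.
    by rewrite E_sym.
  by rewrite -(root_eq deg_w (connect1 wy)).
apply/card_le1_eqP=> y1 y2; rewrite !inE => /andP[w1 c1] /andP[w2 c2].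
by rewrite (forest_avoid_nbr_uniq E_sym E_irr E_forest w1 w2 c1 c2).
Qed.

Lemma safe_col : safe E centers parent col.
Proof.
split=> [v vC cv y vy|w hw _ _].
  have hv : high E v by move: vC; rewrite inE => /andP[].
  case cy: (col y) => [b|] //.
  have := colored_is_root (high_deg_gt0 hv) (connect1 vy).
  by rewrite cy root_center // => /(_ isT) yv; move: cv; rewrite -yv cy.
exact: leq_trans (danger_le_card E parent col w) (card_rootward_nbrs hw).
Qed.

Lemma alice_wins_forest_trunks : alice_wins_RCG E col.
Proof.
apply: (alice_wins_of_safe E_sym (centers := centers) (parent := parent)) safe_col.
- by move=> v; rewrite inE => /andP[].
- exact: parent_center_nbr.
- exact: center_orphan.
- exact: centers_cover.
- exact: parent_high.
Qed.
End TrunkForest.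

Section ReducedForest.
Variables (V : finType) (e : rel V) (c : V -> option 'I_3).
Hypotheses (e_simple : simple_graph e) (e_forest : forest e).
Implicit Types (a b : RV e c).

Lemma RV_trunk a : trunk_prop e c (val a).1.
Proof. by case/andP: (valP a) => /andP[]. Qed.

Lemma RV_subgraph a : is_subgraph e (val a).1.
Proof. by case/and4P: (RV_trunk a). Qed.

Lemma Redge_proj a b : Redge e c a b -> e (val a).2 (val b).2.
Proof. by case/andP=> _ /(is_subgraph_edge (RV_subgraph a)) /and4P[]. Qed.

Lemma Redge_sym : symmetric (Redge e c).
Proof.
move=> a b; apply/idP/idP => /andP[/eqP ab Eab]; rewrite /Redge -ab eqxx /=;
  by case/(is_subgraph_edge (RV_subgraph _))/and4P: Eab; rewrite ?ab.
Qed.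

Lemma Redge'_sym : symmetric (Redge' e c).
Proof. by move=> a b; rewrite /Redge' Redge_sym orbC. Qed.

Lemma Redge'_irr : irreflexive (Redge' e c).
Proof. by move=> a; apply/negP=> /andP[/Redge_proj]; case: e_simple => _ irr; rewrite irr. Qed.

Lemma path_Redge_trunk a s : path (Redge e c) a s -> all (fun b => (val b).1 == (val a).1) s.
Proof.
elim: s a => [//|b s IH] a /= /andP[/andP[/eqP ab _] p].
by rewrite ab eqxx /= IH.
Qed.

(* Within one trunk, vertices of R(F) are determined by their vertex of F,
   so a cycle of R'(F) projects to a cycle of F. *)
Lemma Redge'_forest : forest (Redge' e c).
Proof.
move=> [//|a q] up sz; apply/negP=> cyc; pose proj b := (val b).2.
have pth : path (Redge e c) a (rcons q a) by apply: sub_path cyc => x y /andP[].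
have sameTrunk b : b \in a :: q -> (val b).1 = (val a).1.
  rewrite inE => /orP[/eqP -> //|bq]; apply/eqP.
  by move/allP: (path_Redge_trunk pth); apply; rewrite mem_rcons inE bq orbT.
have proj_inj : {in a :: q &, injective proj}.
  move=> b1 b2 h1 h2 eq2; apply: val_inj.
  rewrite [val b1]surjective_pairing [val b2]surjective_pairing !sameTrunk //.
  by rewrite -/(proj _) eq2.
have := e_forest (p := map proj (a :: q)).
rewrite (map_inj_in_uniq proj_inj) up size_map sz => /(_ isT isT) /negP; apply.
by rewrite /= -map_rcons path_map; apply: sub_path pth => x y /Redge_proj.
Qed.

Lemma Redge'_colored_leaf a : Rcol e c a != None -> deg (Redge' e c) a <= 1.
Proof.
move=> ca; have /and4P[_ _ _ /forallP/(_ (val a).2)] := RV_trunk a.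
case/andP: (valP a) => _ aR /implyP/(_ aR)/implyP/(_ ca)/eqP deg1.
apply: (@leq_trans (deg (Redge e c) a)).
  by apply/subset_leq_card/subsetP=> b; rewrite !inE => /andP[].
rewrite -deg1 /deg /degS -(card_in_imset (f := fun b => (val b).2)); last first.
  move=> b1 b2; rewrite !inE => /andP[/eqP h1 _] /andP[/eqP h2 _] eq2; apply: val_inj.
  by rewrite [val b1]surjective_pairing [val b2]surjective_pairing -h1 -h2 eq2.
apply/subset_leq_card/subsetP=> y /imsetP[b]; rewrite inE => /andP[_ Eab] ->.
by rewrite inE.
Qed.

End ReducedForest.

Theorem lemma6p2 (V : finType) (e : rel V) (c : V -> option 'I_3) :
  simple_graph e -> forest e -> proper_partial_coloring e c ->
  (forall R : subgraph (RV e c), is_trunk (Redge' e c) (Rcol e c) R ->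
     ( #|[set v in R.1 | Rcol e c v != None]| = 1 /\
       (forall x y, (x, y) \in R.2 ->
          ~~ ((2 < deg (Redge' e c) x) && (2 < deg (Redge' e c) y))) )
     \/
     ( (forall v, v \in R.1 -> Rcol e c v = None) /\
       exists2 v, v \in R.1 &
         forall x y, (x, y) \in R.2 -> in_Ebb2S R x y -> (v == x) || (v == y) )) ->
  alice_wins_RCG (Redge' e c) (Rcol e c).
Proof.
move=> e_simple e_forest _ trunk_cases.
apply: alice_wins_forest_trunks trunk_cases.
- exact: Redge'_sym.
- exact: Redge'_irr.
- exact: Redge'_forest.
- exact: Redge'_colored_leaf.
Qed.
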